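(* $\mathsf{sTC}_{\mathbb{N}^\mathbb{N}} \le_{\mathrm{W}} \mathsf{FindHS}_{\boldsymbol{\Sigma}^0_1}$ and hence $\chi_{\Pi^1_1}<_{\mathrm{W}}\mathsf{FindHS}_{\boldsymbol{\Sigma}^0_1}$.
   Context: Weihrauch reducibility: $f\le_{\mathrm{W}} g$ iff there are computable $\Phi,\Psi$ on Baire space such that for every realizer $G$ of $g$, $p\mapsto\Psi(\langle p,G\Phi(p)\rangle)$ realizes $f$; $<_{\mathrm{W}}$ is strict reducibility. The Ramsey space $[\mathbb{N}]^\mathbb{N}$ is the set of strictly increasing functions $\mathbb{N}\to\mathbb{N}$ with Baire-space topology; $fg=f\circ g$. For $P\subseteq[\mathbb{N}]^\mathbb{N}$, $f$ is homogeneous for $P$ if either $fg\in P$ for all $g\in[\mathbb{N}]^\mathbb{N}$ or $fg\notin P$ for all $g$; $\mathrm{HS}(P)$ is the set of homogeneous solutions. Open sets of $[\mathbb{N}]^\mathbb{N}$ are named by enumerations of sets of finite strictly increasing strings whose cones have union the set. $\mathsf{FindHS}_{\boldsymbol{\Sigma}^0_1}$: input an open $P$ with $\mathrm{HS}(P)\cap P\ne\emptyset$, output any element of $\mathrm{HS}(P)\cap P$. $\mathsf{sTC}_{\mathbb{N}^\mathbb{N}}$: given a name (a tree on $\mathbb{N}$) of a closed $A\subseteq\mathbb{N}^\mathbb{N}$, output $(b,x)\in\{0,1\}\times\mathbb{N}^\mathbb{N}$ with ($b=0\Rightarrow A=\emptyset$) and ($b=1\Rightarrow x\in A$). $\chi_{\Pi^1_1}:\mathbb{N}^\mathbb{N}\to\{0,1\}$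 is the characteristic function of a $\Pi^1_1$-complete set (equivalently, decide whether a given tree on $\mathbb{N}$ is well-founded). *)

From mathcomp Require Import all_boot.
Set Implicit Arguments. Unset Strict Implicit. Unset Printing Implicit Defensive.

Definition Baire := nat -> nat.

Definition pairB (p q : Baire) : Baire :=
  fun n => if odd n then q n./2 else p n./2.

Definition seqcode (s : seq nat) : nat := CodeSeq.code s.

Definition initseg (x : Baire) (n : nat) : seq nat := mkseq x n.

(** * Computable (partial) functionals on Baire space:
    oracle mu-recursive functions (Kleene), the oracle being the input p. *)
Inductive rcode : Type :=
  | RZero
  | RSucc
  | RProj (i : nat)
  | ROracle
  | RComp (f : rcode) (gs : seq rcode)
  | RPrimRec (g h : rcode)
  | RMu (f : rcode).

Inductive reval (a : Baire) : rcode -> seq nat -> nat -> Prop :=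
  | ev_zero args : reval a RZero args 0
  | ev_succ args : reval a RSucc args (head 0 args).+1
  | ev_proj i args : reval a (RProj i) args (nth 0 args i)
  | ev_oracle args : reval a ROracle args (a (head 0 args))
  | ev_comp f gs args vs v :
      revals a gs args vs -> reval a f vs v -> reval a (RComp f gs) args v
  | ev_rec0 g h xs v : reval a g xs v -> reval a (RPrimRec g h) (0 :: xs) v
  | ev_recS g h n xs w v :
      reval a (RPrimRec g h) (n :: xs) w ->
      reval a h (n :: w :: xs) v ->
      reval a (RPrimRec g h) (n.+1 :: xs) v
  | ev_rec_nil g h v : reval a g [::] v -> reval a (RPrimRec g h) [::] v
  | ev_mu f args n :
      reval a f (n :: args) 0 ->
      (forall m, m < n -> exists k, reval a f (m :: args) k.+1) ->
      reval a (RMu f) args n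
with revals (a : Baire) : seq rcode -> seq nat -> seq nat -> Prop :=
  | evs_nil args : revals a [::] args [::]
  | evs_cons g gs args v vs :
      reval a g args v -> revals a gs args vs -> revals a (g :: gs) args (v :: vs).

Definition comp_fun (e : rcode) (p q : Baire) : Prop :=
  forall n, reval p e [:: n] (q n).

Definition problem := Baire -> Baire -> Prop.  (* f p q : q is a valid output name for input name p *)

Definition pdom (f : problem) (p : Baire) : Prop := exists q, f p q.

Definition realizes (F : Baire -> Baire) (f : problem) : Prop :=
  forall p, pdom f p -> f p (F p).

Definition weih_le (f g : problem) : Prop :=
  exists ePhi ePsi : rcode,
    forall G : Baire -> Baire, realizes G g ->
      forall p, pdom f p ->
        exists q r, comp_fun ePhi p q /\ comp_fun ePsi (pairB p (G q)) r /\ f p r.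

Definition weih_lt (f g : problem) : Prop := weih_le f g /\ ~ weih_le g f.

(** * Trees on N, named by their characteristic functions (via seqcode) *)
Definition in_tree (p : Baire) (s : seq nat) : Prop := p (seqcode s) = 1.

Definition tree_name (p : Baire) : Prop :=
  (forall n, p n <= 1) /\
  (forall s t, in_tree p (s ++ t) -> in_tree p s).

Definition in_body (p : Baire) (x : Baire) : Prop :=
  forall n, in_tree p (initseg x n).

(** sTC_{N^N}: output (b,x) named by q with q 0 = b and x = tail of q *)
Definition tailB (q : Baire) : Baire := fun n => q n.+1.

Definition sTC_NN : problem := fun p q =>
  tree_name p /\ q 0 <= 1 /\
  (q 0 = 0 -> forall x, ~ in_body p x) /\
  (q 0 = 1 -> in_body p (tailB q)).

Definition wellfounded_tree (p : Baire) : Prop := forall x, ~ in_body p x.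

Definition chi_Pi11 : problem := fun p q =>
  tree_name p /\ (q 0 = 1 <-> wellfounded_tree p) /\ (q 0 = 0 <-> ~ wellfounded_tree p).

Definition strinc (f : Baire) : Prop := forall n, f n < f n.+1.

(** open subsets of [N]^N, named by enumerations of sets of finite strictly
    increasing strings: p n = seqcode s + 1 enumerates s, p n = 0 enumerates nothing *)
Definition enumerated (p : Baire) (s : seq nat) : Prop := exists n, p n = (seqcode s).+1.

Definition open_name (p : Baire) : Prop :=
  forall s, enumerated p s -> sorted ltn s.

Definition in_open (p : Baire) (f : Baire) : Prop :=
  strinc f /\ exists s, enumerated p s /\ s = initseg f (size s).

Definition homogeneous (P : Baire -> Prop) (f : Baire) : Prop :=
  strinc f /\
  ((forall g, strinc g -> P (f \o g)) \/ (forall g, strinc g -> ~ P (f \o g))).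

Definition FindHS_Sigma01 : problem := fun p q =>
  open_name p /\ (exists h, homogeneous (in_open p) h /\ in_open p h) /\
  homogeneous (in_open p) q /\ in_open p q.

From HB Require Import structures.
From mathcomp Require Import all_boot.
From Stdlib Require Import Classical ClassicalEpsilon.
Set Implicit Arguments. Unset Strict Implicit. Unset Printing Implicit Defensive.

(** For a tree [T] let [P_T] be the open set generated by two kinds of strings: the pairs
    [[y0; y1]] of odd numbers coding nodes [s ⊊ t] of [T] (a node [s] is coded by
    [2 code s + 1]), and the strictly increasing strings [y0 :: u] with [y0] even such that
    no node of [T] of length [|u|] lies pointwise below [u].  If [x] is a path of [T], then
    [n ↦ 2 code (x↾n) + 1] is a homogeneous solution in [P_T]; if [T] has no path, then
    [n ↦ 2n] is one, by Kőnig's lemma applied to the finitely branching part of [T] below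
    any increasing sequence.  Conversely let [f] be a homogeneous solution in [P_T].  If
    [f 0] is odd, then every [f j] is odd and the nodes coded by [f 1, f 2, ...] grow
    strictly along a path of [T]; if [f 0] is even, then [T] has no path [x], since
    otherwise [f ∘ g] would not be in [P_T] for any [g] growing faster than [x].  The map
    [T ↦ P_T] and the decoding of the answer are primitive recursive, which gives both
    reductions.

    [FindHS] does not reduce to [chi_Pi11], because the bit returned by [chi_Pi11] carries
    too little information.  A finite-extension construction builds an open set generated
    only by pairs [[a; b]] such that, for each bit, the output of the backward functional
    at [0] either diverges or is some [v] whose partners [w] in enumerated pairs [[v; w]]
    are bounded.  A homogeneous solution [r] must enumerate [[r 0; r k]] for arbitrarily
    large [k], so neither bit can give one. *)

Notation code := CodeSeq.code.
Notation decode := CodeSeq.decode.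

(** * Primitive recursive functionals *)

Inductive pcode : Type :=
  | PZero
  | PSucc
  | PProj of nat
  | POracle
  | PComp of pcode & seq pcode
  | PRec of pcode & pcode.

Fixpoint rcode_of (e : pcode) : rcode :=
  match e with
  | PZero => RZero
  | PSucc => RSucc
  | PProj i => RProj i
  | POracle => ROracle
  | PComp f gs => RComp (rcode_of f) (map rcode_of gs)
  | PRec g h => RPrimRec (rcode_of g) (rcode_of h)
  end.

Fixpoint peval (a : Baire) (e : pcode) (args : seq nat) : nat :=
  match e with
  | PZero => 0
  | PSucc => (head 0 args).+1
  | PProj i => nth 0 args i
  | POracle => a (head 0 args)
  | PComp f gs => peval a f (map (fun g => peval a g args) gs)
  | PRec g h =>
      if args is n :: xs then iteri n (fun k w => peval a h [:: k, w & xs]) (peval a g xs)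
      else peval a g [::]
  end.

Lemma reval_peval a e args : reval a (rcode_of e) args (peval a e args).
Proof.
move: e args; fix IH 1 => -[| |i||f gs|g h] args /=; try by constructor.
- apply: ev_comp (IH _ _); elim: gs => [|g gs IHgs] /=; constructor; [exact: IH | exact: IHgs].
- case: args => [|n xs] /=; first by constructor.
  elim: n => [|n IHn] /=; first by constructor.
  exact: ev_recS IHn (IH _ _).
Qed.

Lemma comp_fun_peval e p : comp_fun (rcode_of e) p (fun n => peval p e [:: n]).
Proof. by move=> n; apply: reval_peval. Qed.

Lemma peval_comp a f gs args :
  peval a (PComp f gs) args = peval a f [seq peval a g args | g <- gs].
Proof. by []. Qed.

Lemma peval_proj a i args : peval a (PProj i) args = nth 0 args i.
Proof. by []. Qed.

Lemma peval_rec0 a g h xs : peval a (PRec g h) (0 :: xs) = peval a g xs.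
Proof. by []. Qed.

Lemma peval_recS a g h n xs :
  peval a (PRec g h) (n.+1 :: xs) = peval a h [:: n, peval a (PRec g h) (n :: xs) & xs].
Proof. by []. Qed.

Arguments peval : simpl never.

(* Combinators pass the whole argument list to their operands, so a program is an
   expression in the arguments [PProj i]. *)
HB.lock Definition psucc (x : pcode) := PComp PSucc [:: x].
HB.lock Definition poracle (x : pcode) := PComp POracle [:: x].

Lemma peval_succ a x args : peval a (psucc x) args = (peval a x args).+1.
Proof. by rewrite psucc.unlock. Qed.

Lemma peval_oracle a x args : peval a (poracle x) args = a (peval a x args).
Proof. by rewrite poracle.unlock. Qed.

Definition pconst (n : nat) := iter n psucc PZero.

Lemma peval_const a n args : peval a (pconst n) args = n.
Proof. by elim: n => //= n IHn; rewrite peval_succ IHn. Qed.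

HB.lock Definition pif (b x y : pcode) := PComp (PRec (PProj 1) (PProj 2)) [:: b; x; y].

Lemma peval_if a b x y args : peval a (pif b x y) args =
  if 0 < peval a b args then peval a x args else peval a y args.
Proof. by rewrite pif.unlock peval_comp /=; case: (peval a b args). Qed.

HB.lock Definition psg (x : pcode) := PComp (PRec PZero (pconst 1)) [:: x].

Lemma peval_sg a x args : peval a (psg x) args = (0 < peval a x args).
Proof.
rewrite psg.unlock peval_comp /=.
by case: (peval a x args) => [|n]; rewrite ?peval_recS ?peval_succ.
Qed.

HB.lock Definition pnot (x : pcode) := pif x PZero (pconst 1).
HB.lock Definition pand (x y : pcode) := pif x (psg y) PZero.
HB.lock Definition por (x y : pcode) := pif x (pconst 1) (psg y).

Lemma peval_not a x args : peval a (pnot x) args = ~~ (0 < peval a x args).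
Proof. by rewrite pnot.unlock peval_if peval_const; case: ifP. Qed.

Lemma peval_and a x y args :
  peval a (pand x y) args = (0 < peval a x args) && (0 < peval a y args).
Proof. by rewrite pand.unlock peval_if peval_sg; case: ifP. Qed.

Lemma peval_or a x y args :
  peval a (por x y) args = (0 < peval a x args) || (0 < peval a y args).
Proof. by rewrite por.unlock peval_if peval_sg peval_const; case: ifP. Qed.

HB.lock Definition padd (x y : pcode) := PComp (PRec (PProj 0) (psucc (PProj 1))) [:: x; y].

Lemma peval_add a x y args : peval a (padd x y) args = peval a x args + peval a y args.
Proof.
rewrite padd.unlock peval_comp /=.
by elim: (peval a x args) => [|n IHn]; rewrite ?peval_recS ?peval_succ ?peval_proj /= ?IHn.
Qed.

HB.lock Definition ppred (x : pcode) := PComp (PRec PZero (PProj 0)) [:: x].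

Lemma peval_pred a x args : peval a (ppred x) args = (peval a x args).-1.
Proof. by rewrite ppred.unlock peval_comp /=; case: (peval a x args). Qed.

HB.lock Definition psub (x y : pcode) := PComp (PRec (PProj 0) (ppred (PProj 1))) [:: y; x].

Lemma peval_sub a x y args : peval a (psub x y) args = peval a x args - peval a y args.
Proof.
rewrite psub.unlock peval_comp /=.
elim: (peval a y args) => [|n IHn]; rewrite ?subn0 ?peval_recS ?peval_pred ?peval_proj //=.
by rewrite IHn subnS.
Qed.

HB.lock Definition podd (x : pcode) := PComp (PRec PZero (pnot (PProj 1))) [:: x].

Lemma peval_odd a x args : peval a (podd x) args = odd (peval a x args).
Proof.
rewrite podd.unlock peval_comp /=.
elim: (peval a x args) => [|n IHn]; rewrite ?peval_recS ?peval_not ?peval_proj //=.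
by rewrite IHn lt0b.
Qed.

HB.lock Definition phalf (x : pcode) :=
  PComp (PRec PZero (padd (PProj 1) (podd (PProj 0)))) [:: x].

Lemma peval_half a x args : peval a (phalf x) args = (peval a x args)./2.
Proof.
rewrite phalf.unlock peval_comp /=.
elim: (peval a x args) => [|n IHn]; rewrite ?peval_recS ?peval_add ?peval_odd ?peval_proj //=.
by rewrite IHn uphalf_half addnC.
Qed.

HB.lock Definition pleq (x y : pcode) := pnot (psub x y).
HB.lock Definition pltn (x y : pcode) := pleq (psucc x) y.
HB.lock Definition peqn (x y : pcode) := pand (pleq x y) (pleq y x).

Lemma peval_leq a x y args : peval a (pleq x y) args = (peval a x args <= peval a y args).
Proof. by rewrite pleq.unlock peval_not peval_sub lt0n negbK subn_eq0. Qed.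

Lemma peval_ltn a x y args : peval a (pltn x y) args = (peval a x args < peval a y args).
Proof. by rewrite pltn.unlock peval_leq peval_succ. Qed.

Lemma peval_eqn a x y args : peval a (peqn x y) args = (peval a x args == peval a y args).
Proof. by rewrite peqn.unlock peval_and !peval_leq !lt0b eqn_leq. Qed.

HB.lock Definition piter_half (j x : pcode) := PComp (PRec (PProj 0) (phalf (PProj 1))) [:: j; x].

Lemma peval_iter_half a j x args :
  peval a (piter_half j x) args = iter (peval a j args) half (peval a x args).
Proof.
rewrite piter_half.unlock peval_comp /=.
by elim: (peval a j args) => [|n IHn]; rewrite ?peval_recS ?peval_half ?peval_proj //= IHn.
Qed.

Lemma find_iotaS (P : pred nat) n :
  find P (iota 0 n.+1) = let j := find P (iota 0 n) in if j < n then j else if P n then n else n.+1.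
Proof.
rewrite -addn1 iotaD find_cat has_find size_iota /=.
by case: ltnP => // _; case: (P n); rewrite ?addn0 ?addn1.
Qed.

Lemma find_iota (P : pred nat) n m :
  n < m -> P n -> (forall j, j < n -> ~~ P j) -> find P (iota 0 m) = n.
Proof.
move=> ltnm Pn before_n; rewrite -(subnKC (ltnW ltnm)) iotaD find_cat size_iota.
have -> : has P (iota 0 n) = false by apply/hasPn => j; rewrite mem_iota; exact: before_n.
by case: (m - n) (subn_gt0 n m) => [|k]; rewrite ltnm //= => _; rewrite add0n Pn addn0.
Qed.

Lemma peval_projs a d (xs args : seq nat) : size xs = d ->
  [seq peval a g (xs ++ args) | g <- map PProj (iota d (size args))] = args.
Proof.
move=> <-; rewrite -[size xs]addn0 iotaDl -!map_comp -[RHS](mkseq_nth 0); apply: eq_map => i /=.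
by rewrite peval_proj nth_cat ltnNge leq_addr addKn.
Qed.

(* [body] sees the bound variable as [PProj 0] and the [m] arguments as [PProj 1], ...,
   [PProj m]. *)
HB.lock Definition pfind (m : nat) (k body : pcode) :=
  PComp (PRec PZero (pif (pltn (PProj 1) (PProj 0)) (PProj 1)
                       (pif (PComp body (PProj 0 :: map PProj (iota 2 m)))
                            (PProj 0) (psucc (PProj 0)))))
        (k :: map PProj (iota 0 m)).

Lemma peval_find a m k body args : size args = m ->
  peval a (pfind m k body) args =
  find (fun j => 0 < peval a body (j :: args)) (iota 0 (peval a k args)).
Proof.
move=> <-; rewrite pfind.unlock peval_comp /= (@peval_projs a 0 [::]) //.
elim: (peval a k args) => [|n IHn]; rewrite ?peval_rec0 // peval_recS find_iotaS -IHn.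
set w := peval a (PRec _ _) _.
rewrite !peval_if peval_ltn !peval_proj /= peval_comp /= (@peval_projs a 2 [:: n; w]) //.
by rewrite peval_succ peval_proj lt0b.
Qed.

HB.lock Definition pall (m : nat) (k body : pcode) := peqn (pfind m k (pnot body)) k.
HB.lock Definition phas (m : nat) (k body : pcode) := pltn (pfind m k body) k.

Lemma peval_all a m k body args : size args = m ->
  peval a (pall m k body) args =
  all (fun j => 0 < peval a body (j :: args)) (iota 0 (peval a k args)).
Proof.
move=> size_args; rewrite pall.unlock peval_eqn peval_find //.
set P := fun j => 0 < peval a body (j :: args).
rewrite (@eq_find _ _ (predC P)) => [|j]; last by rewrite /= peval_not lt0b.
congr (nat_of_bool _); rewrite -[RHS]negbK -has_predC has_find -leqNgt size_iota.
by rewrite eqn_leq -[X in find _ _ <= X](size_iota 0 (peval a k args)) find_size.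
Qed.

Lemma peval_has a m k body args : size args = m ->
  peval a (phas m k body) args =
  has (fun j => 0 < peval a body (j :: args)) (iota 0 (peval a k args)).
Proof. by move=> size_args; rewrite phas.unlock peval_ltn peval_find // has_find size_iota. Qed.

(** * Codes of finite sequences *)

Lemma code_cons x s : code (x :: s) = 2 ^ x * (code s).*2.+1.
Proof. by []. Qed.

Lemma code_eq0 s : (code s == 0) = (s == [::]).
Proof. by case: s => // x s; rewrite code_cons muln_eq0 expn_eq0. Qed.

Lemma code_inj s t : code s = code t -> s = t.
Proof. exact: (can_inj CodeSeq.codeK). Qed.

Lemma size_code s : size s <= code s.
Proof.
elim: s => // x s IHs; rewrite code_cons /=.
apply: leq_trans (leq_pmull _ _); last by rewrite expn_gt0.
by rewrite ltnS -addnn (leq_trans IHs) ?leq_addr.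
Qed.

Lemma code_leq s t : all2 leq s t -> code s <= code t.
Proof.
elim: s t => [|x s IHs] [|y t] //= /andP[lexy /IHs lest].
by rewrite leq_mul ?leq_pexp2l // ltnS leq_double.
Qed.

Lemma code_prefix_ltn s t : prefix s t -> size s < size t -> code s < code t.
Proof.
move=> /prefixP[u ->]; rewrite size_cat -{1}[size s]addn0 ltn_add2l lt0n size_eq0.
elim: s => [|x s IHs] u_nil /=; first by rewrite lt0n code_eq0.
by rewrite ltn_pmul2l ?expn_gt0 // ltnS ltn_double IHs.
Qed.

Lemma iter_half_pow j n m : j <= n -> iter j half (2 ^ n * m) = 2 ^ (n - j) * m.
Proof.
elim: j => [|j IHj] ltjn; first by rewrite subn0.
by rewrite iterS IHj ?(ltnW ltjn) // -(subnSK ltjn) expnS -mulnA mul2n doubleK.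
Qed.

(* By [code_cons], the head of a nonempty sequence is the 2-adic valuation of its code. *)
HB.lock Definition phead (x : pcode) :=
  PComp (pfind 1 (PProj 0) (podd (piter_half (PProj 0) (PProj 1)))) [:: x].

Lemma peval_head a x args : peval a (phead x) args = head 0 (decode (peval a x args)).
Proof.
rewrite phead.unlock peval_comp /= peval_find // peval_proj /=.
rewrite -[peval a x args]CodeSeq.decodeK CodeSeq.codeK; case: (decode _) => [|y s] //=.
apply: find_iota => [||j ltjy]; rewrite ?peval_odd ?peval_iter_half ?peval_proj /= ?lt0b.
- by have /andP[] := CodeSeq.ltn_code (y :: s).
- by rewrite iter_half_pow // subnn mul1n /= odd_double.
- by rewrite iter_half_pow ?(ltnW ltjy) // -(subnSK ltjy) expnS -mulnA oddM.
Qed.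

HB.lock Definition pbehead (x : pcode) := phalf (ppred (piter_half (phead x) x)).

Lemma peval_behead a x args :
  peval a (pbehead x) args = code (behead (decode (peval a x args))).
Proof.
rewrite pbehead.unlock peval_half peval_pred peval_iter_half peval_head.
rewrite -[peval a x args]CodeSeq.decodeK CodeSeq.codeK; case: (decode _) => [|y s] //=.
by rewrite iter_half_pow // subnn mul1n /= -[_./2]/(half (_.*2)) doubleK.
Qed.

HB.lock Definition pdrop (k x : pcode) := PComp (PRec (PProj 0) (pbehead (PProj 1))) [:: k; x].

Lemma peval_drop a k x args :
  peval a (pdrop k x) args = code (drop (peval a k args) (decode (peval a x args))).
Proof.
rewrite pdrop.unlock peval_comp /=.
elim: (peval a k args) => [|n IHn]; first by rewrite peval_rec0 drop0 CodeSeq.decodeK.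
by rewrite peval_recS peval_behead peval_proj /= IHn CodeSeq.codeK -drop1 drop_drop.
Qed.

HB.lock Definition pnth (k x : pcode) := phead (pdrop k x).

Lemma peval_nth a k x args :
  peval a (pnth k x) args = nth 0 (decode (peval a x args)) (peval a k args).
Proof. by rewrite pnth.unlock peval_head peval_drop CodeSeq.codeK -nth0 nth_drop addn0. Qed.

HB.lock Definition psize (x : pcode) :=
  PComp (pfind 1 (psucc (PProj 0)) (pnot (pdrop (PProj 0) (PProj 1)))) [:: x].

Lemma peval_size a x args : peval a (psize x) args = size (decode (peval a x args)).
Proof.
rewrite psize.unlock peval_comp /= peval_find // peval_succ.
apply: find_iota => [||j ltjs]; rewrite ?peval_not ?peval_drop !peval_proj /= ?lt0n ?negbK.
- by rewrite ltnS -{2}[peval a x args]CodeSeq.decodeK size_code.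
- by rewrite code_eq0 drop_size.
- by rewrite code_eq0 -size_eq0 size_drop subn_eq0 leqNgt ltjs.
Qed.

Definition pevalE := (peval_comp, peval_proj, peval_const, peval_succ, peval_oracle,
  peval_if, peval_sg, peval_not, peval_and, peval_or, peval_add, peval_pred, peval_sub,
  peval_odd, peval_half, peval_leq, peval_ltn, peval_eqn, peval_iter_half,
  peval_head, peval_behead, peval_drop, peval_nth, peval_size, CodeSeq.codeK, lt0b).

Lemma all_iota1 (P : pred nat) n : all P (iota 1 n) = all (fun i => P i.+1) (iota 0 n).
Proof. by rewrite -[1]addn0 iotaDl all_map. Qed.

Section NthCharacterizations.

Variables (T : Type) (x0 : T).

Lemma all2_nth (r : rel T) s t : all2 r s t =
  (size s == size t) && all (fun i => r (nth x0 s i) (nth x0 t i)) (iota 0 (size s)).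
Proof.
by elim: s t => [|x s IHs] [|y t] //=; rewrite all_iota1 IHs eqSS andbCA.
Qed.

Lemma sorted_nth (r : rel T) s :
  sorted r s = all (fun i => r (nth x0 s i) (nth x0 s i.+1)) (iota 0 (size s).-1).
Proof.
apply/(sortedP x0)/allP => [lt_s i|lt_s i lti].
- by rewrite mem_iota ltn_predRL => /lt_s.
- by apply: lt_s; rewrite mem_iota ltn_predRL.
Qed.

End NthCharacterizations.

Lemma prefix_nth (T : eqType) (x0 : T) (s t : seq T) : prefix s t =
  (size s <= size t) && all (fun i => nth x0 s i == nth x0 t i) (iota 0 (size s)).
Proof.
by elim: s t => [|x s IHs] [|y t] //=; rewrite all_iota1 IHs ltnS andbCA.
Qed.

HB.lock Definition pall2_leq (x y : pcode) :=
  pand (peqn (psize x) (psize y))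
    (PComp (pall 2 (psize (PProj 0)) (pleq (pnth (PProj 0) (PProj 1)) (pnth (PProj 0) (PProj 2))))
           [:: x; y]).

Lemma peval_all2_leq a x y args :
  peval a (pall2_leq x y) args = all2 leq (decode (peval a x args)) (decode (peval a y args)).
Proof.
rewrite pall2_leq.unlock (all2_nth 0) peval_and peval_comp /= peval_all //= !pevalE /=.
by congr (nat_of_bool (_ && _)); apply: eq_all => j; rewrite !pevalE.
Qed.

HB.lock Definition pprefix (x y : pcode) :=
  pand (pleq (psize x) (psize y))
    (PComp (pall 2 (psize (PProj 0)) (peqn (pnth (PProj 0) (PProj 1)) (pnth (PProj 0) (PProj 2))))
           [:: x; y]).

Lemma peval_prefix a x y args :
  peval a (pprefix x y) args = prefix (decode (peval a x args)) (decode (peval a y args)).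
Proof.
rewrite pprefix.unlock (prefix_nth 0) peval_and peval_comp /= peval_all //= !pevalE /=.
by congr (nat_of_bool (_ && _)); apply: eq_all => j; rewrite !pevalE.
Qed.

HB.lock Definition psorted (x : pcode) :=
  PComp (pall 1 (ppred (psize (PProj 0)))
           (pltn (pnth (PProj 0) (PProj 1)) (pnth (psucc (PProj 0)) (PProj 1))))
        [:: x].

Lemma peval_sorted a x args : peval a (psorted x) args = sorted ltn (decode (peval a x args)).
Proof.
rewrite psorted.unlock (sorted_nth 0) peval_comp /= peval_all //= !pevalE /=.
by congr nat_of_bool; apply: eq_all => j; rewrite !pevalE.
Qed.

(** * Trees, initial segments and Kőnig's lemma *)

Lemma strinc_ltn f i j : strinc f -> i < j -> f i < f j.
Proof.
move=> f_inc; elim: j => // j IHj; rewrite ltnS leq_eqVlt => /predU1P[->|/IHj lt_ij] //.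
exact: ltn_trans lt_ij (f_inc j).
Qed.

Lemma strinc_ge f n : strinc f -> n <= f n.
Proof. by move=> f_inc; elim: n => // n IHn; exact: leq_ltn_trans IHn (f_inc n). Qed.

Lemma strinc_comp f g : strinc f -> strinc g -> strinc (f \o g).
Proof. by move=> f_inc g_inc n; exact: strinc_ltn f_inc (g_inc n). Qed.

Lemma in_tree_prefix p s t : tree_name p -> prefix s t -> in_tree p t -> in_tree p s.
Proof. by case=> _ tree_cat /prefixP[u ->]; apply: tree_cat. Qed.

Lemma size_initseg x n : size (initseg x n) = n.
Proof. exact: size_mkseq. Qed.

Lemma initseg_nth x n i : i < n -> nth 0 (initseg x n) i = x i.
Proof. exact: nth_mkseq. Qed.

Lemma initseg_cons x n : initseg x n.+1 = x 0 :: initseg (fun i => x i.+1) n.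
Proof. by rewrite /initseg /mkseq /= -[1]addn0 iotaDl -map_comp. Qed.

Lemma prefix_initseg x m n : m <= n -> prefix (initseg x m) (initseg x n).
Proof.
by move=> le_mn; rewrite prefixE size_initseg /initseg /mkseq -map_take take_iota (minn_idPl le_mn).
Qed.

Lemma sorted_initseg x n : strinc x -> sorted ltn (initseg x n).
Proof.
move=> x_inc; rewrite /initseg /mkseq sorted_map.
by apply: sub_sorted (iota_ltn_sorted 0 n) => i j; apply: strinc_ltn.
Qed.

Lemma eq_in_body p x y : x =1 y -> in_body p x -> in_body p y.
Proof. by move=> eq_xy x_path n; rewrite /initseg -(eq_mkseq eq_xy). Qed.

Definition dominated (p : Baire) (t : seq nat) := exists2 tau, in_tree p tau & all2 leq tau t.

Section Konig.

Variables (p y : Baire).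
Hypothesis p_tree : tree_name p.

Definition bounded_by (s : seq nat) := forall i, i < size s -> nth 0 s i <= y i.

Definition extendable (tau : seq nat) := forall n, exists sigma,
  [/\ in_tree p sigma, bounded_by sigma, prefix tau sigma & n <= size sigma].

Lemma extendable_child tau : extendable tau -> exists v, extendable (rcons tau v).
Proof.
move=> ext_tau; apply: NNPP => no_child.
pose short v n := forall sigma, in_tree p sigma -> bounded_by sigma ->
  prefix (rcons tau v) sigma -> size sigma < n.
have short_child v : exists n, short v n.
  apply: NNPP => long; apply: no_child; exists v => n; apply: NNPP => no_ext; apply: long.
  exists n => sigma T_sigma b_sigma pre; rewrite ltnNge; apply/negP => le_n.
  by apply: no_ext; exists sigma.
have [M shortM] : exists M, forall v, v <= y (size tau) -> short v M.
  elim: (y (size tau)) => [|b [M shortM]].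
    by have [n short0] := short_child 0; exists n => v; rewrite leqn0 => /eqP->.
  have [n shortb] := short_child b.+1.
  exists (maxn M n) => v; rewrite leq_eqVlt => /predU1P[->|/shortM short_v] sigma T_s b_s pre.
  - by rewrite leq_max (shortb sigma T_s b_s pre) orbT.
  - by rewrite leq_max (short_v sigma T_s b_s pre).
have [sigma [T_sigma b_sigma pre]] := ext_tau (maxn M (size tau).+1).
rewrite geq_max => /andP[le_M lt_tau].
have v_bound := b_sigma _ lt_tau.
have : prefix (rcons tau (nth 0 sigma (size tau))) sigma.
  by move: pre; rewrite !prefixE size_rcons (take_nth 0 lt_tau) => /eqP->.
by move/(shortM _ v_bound _ T_sigma b_sigma); rewrite ltnNge le_M.
Qed.

Lemma extendable_path : extendable [::] -> exists x, in_body p x.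
Proof.
move=> ext_nil.
have step tau : exists v, extendable tau -> extendable (rcons tau v).
  by case: (classic (extendable tau)) => [/extendable_child[v]|]; [exists v | exists 0].
pose next tau := proj1_sig (constructive_indefinite_description _ (step tau)).
have nextP tau : extendable tau -> extendable (rcons tau (next tau)).
  exact: proj2_sig (constructive_indefinite_description _ (step tau)).
pose fix walk n := if n is k.+1 then rcons (walk k) (next (walk k)) else [::].
exists (fun n => next (walk n)) => n.
have -> : initseg (fun n => next (walk n)) n = walk n.
  by elim: n => //= n IHn; rewrite /initseg mkseqS -IHn.
have walk_ext : extendable (walk n) by elim: n => //= n; apply: nextP.
have [sigma [T_sigma _ pre _]] := walk_ext 0.
exact: in_tree_prefix pre T_sigma.
Qed.

End Konig.

Lemma konig_bounded p y : tree_name p ->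
  (forall n, dominated p (initseg y n)) -> exists x, in_body p x.
Proof.
move=> p_tree dom; apply: (extendable_path (y := y) p_tree) => n.
have [tau T_tau] := dom n; rewrite (all2_nth 0) size_initseg => /andP[/eqP size_tau /allP le_tau].
exists tau; split; rewrite ?prefix0s ?size_tau // => i lt_i.
have lt_in : i < n by rewrite -size_tau.
by rewrite -(initseg_nth y lt_in); apply: le_tau; rewrite mem_iota add0n.
Qed.

(** * The open set of a tree *)

Definition dominatedb (p : Baire) (t : seq nat) : bool :=
  has (fun c => (p c == 1) && all2 leq (decode c) t) (iota 0 (code t).+1).

Lemma dominatedP p t : reflect (dominated p t) (dominatedb p t).
Proof.
apply: (iffP hasP) => [[c _ /andP[/eqP pc le_ct]]|[tau p_tau le_tau_t]].
- by exists (decode c) => //; rewrite /in_tree /seqcode CodeSeq.decodeK.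
- exists (code tau); first by rewrite mem_iota ltnS code_leq.
  by rewrite CodeSeq.codeK le_tau_t andbT; apply/eqP.
Qed.

HB.lock Definition pdominated (x : pcode) :=
  PComp (phas 1 (psucc (PProj 0))
           (pand (peqn (poracle (PProj 0)) (pconst 1)) (pall2_leq (PProj 0) (PProj 1))))
        [:: x].

Lemma peval_dominated a x args :
  peval a (pdominated x) args = dominatedb a (decode (peval a x args)).
Proof.
rewrite pdominated.unlock peval_comp /= peval_has // !pevalE [nth _ _ _]/=.
rewrite /dominatedb CodeSeq.decodeK.
by congr nat_of_bool; apply: eq_has => c; rewrite !pevalE peval_all2_leq /= !pevalE /=.
Qed.

Definition node (y : nat) : seq nat := decode y./2.

Definition chain_pair (p : Baire) (y0 y1 : nat) : bool :=
  [&& odd y0, odd y1, prefix (node y0) (node y1), size (node y0) < size (node y1) & p y1./2 == 1].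

Definition escape (p : Baire) (s : seq nat) : bool :=
  if s is y0 :: t then [&& sorted ltn s, ~~ odd y0 & ~~ dominatedb p t] else false.

Definition generator (p : Baire) (s : seq nat) : bool :=
  (if s is [:: y0; y1] then chain_pair p y0 y1 else false) || escape p s.

Definition tree_open (p : Baire) : Baire := fun n => if generator p (decode n) then n.+1 else 0.

Definition tree_open_prog : pcode :=
  let x := PProj 0 in
  let y0 := pnth (pconst 0) x in
  let y1 := pnth (pconst 1) x in
  let chain := pand (podd y0) (pand (podd y1) (pand (pprefix (phalf y0) (phalf y1))
                 (pand (pltn (psize (phalf y0)) (psize (phalf y1)))
                       (peqn (poracle (phalf y1)) (pconst 1))))) in
  let esc := pand (psg x) (pand (psorted x)
               (pand (pnot (podd y0)) (pnot (pdominated (pbehead x))))) in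
  pif (por (pand (peqn (psize x) (pconst 2)) chain) esc) (psucc x) PZero.

Lemma peval_tree_open p n : peval p tree_open_prog [:: n] = tree_open p n.
Proof.
rewrite /tree_open_prog !(pevalE, peval_prefix, peval_sorted, peval_dominated) /= /tree_open.
have -> : (0 < n) = (decode n != [::]) by rewrite -code_eq0 CodeSeq.decodeK lt0n.
by case: (decode n) => [|y0 [|y1 [|y2 s]]].
Qed.

Lemma tree_open_computable p : comp_fun (rcode_of tree_open_prog) p (tree_open p).
Proof. by move=> n; rewrite -peval_tree_open; apply: reval_peval. Qed.

Lemma enumerated_tree_open p s : enumerated (tree_open p) s <-> generator p s.
Proof.
split=> [[n]|gen_s]; last by exists (code s); rewrite /tree_open CodeSeq.codeK gen_s.
rewrite /tree_open; case: ifP => // gen_n [n_code].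
by move: gen_n; rewrite n_code /seqcode CodeSeq.codeK.
Qed.

Lemma chain_pair_ltn p y0 y1 : chain_pair p y0 y1 -> y0 < y1.
Proof.
case/and5P=> odd0 odd1 pre lt_size _.
have := code_prefix_ltn pre lt_size; rewrite /node !CodeSeq.decodeK => lt_half.
by rewrite -(odd_double_half y0) -(odd_double_half y1) odd0 odd1 !add1n ltnS ltn_double.
Qed.

Lemma open_name_tree_open p : open_name (tree_open p).
Proof.
move=> s /enumerated_tree_open /orP[|].
- by case: s => [|y0 [|y1 []]] // /chain_pair_ltn /= ->.
- by case: s => [|y0 t] // /and3P[].
Qed.

(** * Homogeneous solutions *)

Lemma homogeneous_comp (P : Baire -> Prop) f :
  homogeneous P f -> P f -> forall g, strinc g -> P (f \o g).
Proof. by case=> _ [//|all_out] Pf; have := all_out id (fun n => ltnSn n). Qed.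

Lemma in_tree_open_cases p f : in_open (tree_open p) f ->
  chain_pair p (f 0) (f 1) \/
  (~~ odd (f 0) /\ exists n, ~ dominated p (initseg (fun i => f i.+1) n)).
Proof.
case=> _ [s [/enumerated_tree_open /orP[] gen_s s_init]].
- by left; case: s s_init gen_s => [|y0 [|y1 []]] // [-> ->].
- right; case: s s_init gen_s => [|y0 t] //; rewrite /= initseg_cons => -[-> t_init].
  case/and3P=> _ even0 /dominatedP undom; split=> //.
  by exists (size t); rewrite -t_init.
Qed.

Lemma tree_open_solution p : tree_name p ->
  exists h, homogeneous (in_open (tree_open p)) h /\ in_open (tree_open p) h.
Proof.
move=> p_tree.
suff [h [h_inc h_all]] : exists h, strinc h /\ forall g, strinc g -> in_open (tree_open p) (h \o g).
  by exists h; split; [split; [|left] | exact: h_all id (fun n => ltnSn n)].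
case: (classic (exists x, in_body p x)) => [[x x_path]|no_path].
- pose h n := (code (initseg x n)).*2.+1.
  have h_inc : strinc h.
    move=> n; rewrite ltnS ltn_double code_prefix_ltn ?size_initseg ?prefix_initseg //.
  exists h; split=> // g g_inc; split; first exact: strinc_comp.
  exists [:: h (g 0); h (g 1)]; split=> //; apply/enumerated_tree_open.
  rewrite /generator /chain_pair /node /h /= !uphalf_double !CodeSeq.codeK !odd_double /=.
  rewrite prefix_initseg ?(ltnW (g_inc 0)) // !size_initseg g_inc /=.
  by rewrite (x_path (g 1)) eqxx.
- pose h n := n.*2.
  have h_inc : strinc h by move=> n; rewrite ltn_double.
  exists h; split=> // g g_inc; split; first exact: strinc_comp.
  have [n undom] : exists n, ~ dominated p (initseg (fun i => h (g i.+1)) n).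
    apply: NNPP => all_dom; apply: no_path.
    apply: (konig_bounded (y := fun i => h (g i.+1)) p_tree) => n.
    by apply: NNPP => undom; apply: all_dom; exists n.
  exists (initseg (h \o g) n.+1); split; last by rewrite size_initseg.
  apply/enumerated_tree_open; rewrite initseg_cons /generator /escape -initseg_cons.
  rewrite sorted_initseg /=; last exact: strinc_comp.
  by apply/orP; right; rewrite /h odd_double; apply/dominatedP.
Qed.

Lemma prefix_chain_initseg (sigma : nat -> seq nat) :
  (forall j, prefix (sigma j) (sigma j.+1) /\ size (sigma j) < size (sigma j.+1)) ->
  forall n m, n <= m -> initseg (fun k => nth 0 (sigma k.+1) k) n = take n (sigma m).
Proof.
move=> chain.
have size_ge j : j <= size (sigma j) by elim: j => // j IHj; exact: leq_ltn_trans IHj (chain j).2.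
have pre i j : i <= j -> prefix (sigma i) (sigma j).
  move/subnK <-; elim: (j - i) => [|d IHd]; first exact: prefix_refl.
  exact: prefix_trans IHd (chain _).1.
move=> n m le_nm; apply: (@eq_from_nth _ 0) => [|k]; rewrite size_initseg.
  by rewrite size_takel // (leq_trans le_nm (size_ge m)).
move=> lt_kn; have /pre: k.+1 <= m := leq_trans lt_kn le_nm.
rewrite prefixE initseg_nth // nth_take // => /eqP <-.
by rewrite nth_take // size_ge.
Qed.

Section Solutions.

Variables (p f : Baire).
Hypotheses (p_tree : tree_name p) (f_hom : homogeneous (in_open (tree_open p)) f)
  (f_in : in_open (tree_open p) f).

Lemma solution_chain i j : i < j -> odd (f i) -> chain_pair p (f i) (f j).
Proof.
move=> lt_ij odd_i; pose g k := if k is k'.+1 then j + k' else i.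
have g_inc : strinc g by case=> [|k] /=; rewrite ?addn0 ?addnS.
case: (in_tree_open_cases (homogeneous_comp f_hom f_in g_inc)) => [|[]] /=.
  by rewrite addn0.
by rewrite odd_i.
Qed.

Lemma solution_odd_path : odd (f 0) -> in_body p (fun n => nth 0 (node (f n.+1)) n).
Proof.
move=> odd0.
have odd_f j : odd (f j) by case: j => // j; case/and5P: (solution_chain (ltn0Sn j) odd0).
have chain j : prefix (node (f j)) (node (f j.+1)) /\ size (node (f j)) < size (node (f j.+1)).
  by case/and5P: (solution_chain (ltnSn j) (odd_f j)).
move=> n; rewrite (prefix_chain_initseg chain (leqnSn n)).
apply: in_tree_prefix (prefix_take _ _) _ => //.
case/and5P: (solution_chain (ltn0Sn n) odd0) => _ _ _ _ /eqP.
by rewrite /in_tree /seqcode /node CodeSeq.decodeK.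
Qed.

Lemma solution_even_wellfounded : ~~ odd (f 0) -> wellfounded_tree p.
Proof.
move=> even0 x x_path.
(* [g] outgrows [x], so the tail of [f \o g] dominates every initial segment of [x]. *)
pose fix g k := if k is k'.+1 then maxn (g k').+1 (x k') else 0.
have g_inc : strinc g by move=> k /=; rewrite leq_maxl.
case: (in_tree_open_cases (homogeneous_comp f_hom f_in g_inc)) => [/and5P[odd_g0]|[_ [n]]].
  by rewrite /= odd_g0 in even0.
apply; exists (initseg x n) => //; rewrite (all2_nth 0) !size_initseg eqxx /=.
apply/allP => i; rewrite mem_iota add0n => lt_in; rewrite !initseg_nth //=.
exact: leq_trans (leq_maxr _ _) (strinc_ge _ f_hom.1).
Qed.

End Solutions.

Lemma pairB_odd p q m : pairB p q (m + m).+1 = q m.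
Proof. by rewrite /pairB addnn /= odd_double /= uphalf_double. Qed.

Lemma pairB_one p q : pairB p q 1 = q 0.
Proof. exact: pairB_odd p q 0. Qed.

Lemma tree_open_dom p : tree_name p -> pdom FindHS_Sigma01 (tree_open p).
Proof.
move=> p_tree; have [h [h_hom h_in]] := tree_open_solution p_tree.
by exists h; split; [exact: open_name_tree_open | split; [exists h | ]].
Qed.

Definition sTC_output_prog : pcode :=
  pif (PProj 0) (pnth (ppred (PProj 0)) (phalf (poracle (psucc (padd (PProj 0) (PProj 0))))))
      (podd (poracle (pconst 1))).

Lemma peval_sTC_output p f m : peval (pairB p f) sTC_output_prog [:: m] =
  if m is k.+1 then nth 0 (node (f m)) k else odd (f 0).
Proof. by rewrite !pevalE /=; case: m => [|k]; rewrite ?pairB_one ?pairB_odd. Qed.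

Lemma sTC_le_FindHS : weih_le sTC_NN FindHS_Sigma01.
Proof.
exists (rcode_of tree_open_prog), (rcode_of sTC_output_prog) => G G_real p [_ [p_tree _]].
have [_ [_ [f_hom f_in]]] := G_real _ (tree_open_dom p_tree).
set f := G (tree_open p) in f_hom f_in *.
exists (tree_open p), (fun m => peval (pairB p f) sTC_output_prog [:: m]).
split; first exact: tree_open_computable.
split; first exact: comp_fun_peval.
rewrite /sTC_NN /tailB !peval_sTC_output; case odd0: (odd (f 0)).
- do ![split=> //] => _; apply: eq_in_body (solution_odd_path p_tree f_hom f_in odd0) => n.
  by rewrite peval_sTC_output.
- do ![split=> //] => _.
  exact: solution_even_wellfounded f_hom f_in (negbT odd0).
Qed.

Definition chi_output_prog : pcode := pnot (podd (poracle (pconst 1))).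

Lemma chi_le_FindHS : weih_le chi_Pi11 FindHS_Sigma01.
Proof.
exists (rcode_of tree_open_prog), (rcode_of chi_output_prog) => G G_real p [_ [p_tree _]].
have [_ [_ [f_hom f_in]]] := G_real _ (tree_open_dom p_tree).
set f := G (tree_open p) in f_hom f_in *.
exists (tree_open p), (fun m => peval (pairB p f) chi_output_prog [:: m]).
split; first exact: tree_open_computable.
split; first exact: comp_fun_peval.
rewrite /chi_Pi11 !pevalE pairB_one; case odd0: (odd (f 0)).
- have path := solution_odd_path p_tree f_hom f_in odd0.
  split=> //=; split; split=> //.
  + by move=> wf; case: (wf _ path).
  + by move=> _ wf; apply: wf path.
- have wf := solution_even_wellfounded f_hom f_in (negbT odd0).
  by split=> //=; split; split.
Qed.

(** * Use and determinism of computations *)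

Definition agree_below (N : nat) (a a' : Baire) := forall i, i < N -> a' i = a i.

Definition finite_use (P : Baire -> Prop) (a : Baire) :=
  exists N, forall a', agree_below N a a' -> P a'.

Lemma sub_finite_use P Q a : (forall a', P a' -> Q a') -> finite_use P a -> finite_use Q a.
Proof. by move=> PQ [N HN]; exists N => a' /HN /PQ. Qed.

Lemma finite_use_and P Q a :
  finite_use P a -> finite_use Q a -> finite_use (fun a' => P a' /\ Q a') a.
Proof.
move=> [N1 HP] [N2 HQ]; exists (maxn N1 N2) => a' Ha; split.
- by apply: HP => i Hi; apply: Ha; rewrite leq_max Hi.
- by apply: HQ => i Hi; apply: Ha; rewrite leq_max Hi orbT.
Qed.

Lemma finite_use_below (Q : Baire -> nat -> Prop) a n :
  (forall m, m < n -> finite_use (Q^~ m) a) -> finite_use (fun a' => forall m, m < n -> Q a' m) a.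
Proof.
elim: n => [|n IHn] HQ; first by exists 0.
have [N HN] := finite_use_and (IHn (fun m Hm => HQ m (ltnW Hm))) (HQ n (ltnSn n)).
exists N => a' /HN [Hlt Hn] m; rewrite ltnS leq_eqVlt => /predU1P [->|] //; exact: Hlt.
Qed.

Fixpoint reval_use a e args v (H : reval a e args v) {struct H} :
  finite_use (fun a' => reval a' e args v) a
with revals_use a gs args vs (H : revals a gs args vs) {struct H} :
  finite_use (fun a' => revals a' gs args vs) a.
Proof.
- case: H => {e args v}.
  + by move=> args; exists 0 => a' _; constructor.
  + by move=> args; exists 0 => a' _; constructor.
  + by move=> i args; exists 0 => a' _; constructor.
  + by move=> args; exists (head 0 args).+1 => a' Ha; rewrite -Ha //; constructor.
  + move=> f gs args vs v Hgs Hf.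
    apply: sub_finite_use (finite_use_and (revals_use _ _ _ _ Hgs) (reval_use _ _ _ _ Hf)) => a' [].
    exact: ev_comp.
  + by move=> g h xs v Hg; apply: sub_finite_use (reval_use _ _ _ _ Hg) => a'; apply: ev_rec0.
  + move=> g h n xs w v H1 H2.
    apply: sub_finite_use (finite_use_and (reval_use _ _ _ _ H1) (reval_use _ _ _ _ H2)) => a' [].
    exact: ev_recS.
  + by move=> g h v Hg; apply: sub_finite_use (reval_use _ _ _ _ Hg) => a'; apply: ev_rec_nil.
  + move=> f args n H0 Hlt.
    have HQ m : m < n -> finite_use (fun a' => exists k, reval a' f (m :: args) k.+1) a.
      by move/Hlt=> [k Hk]; apply: sub_finite_use (reval_use _ _ _ _ Hk) => a' Hk'; exists k.
    apply: sub_finite_use (finite_use_and (reval_use _ _ _ _ H0) (finite_use_below HQ)) => a' [].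
    exact: ev_mu.
- case: H => {gs args vs}.
  + by move=> args; exists 0 => a' _; constructor.
  + move=> g gs args v vs Hg Hgs.
    apply: sub_finite_use (finite_use_and (reval_use _ _ _ _ Hg) (revals_use _ _ _ _ Hgs)) => a' [].
    exact: evs_cons.
Qed.

Lemma reval_comp_inv a f gs args v :
  reval a (RComp f gs) args v -> exists2 vs, revals a gs args vs & reval a f vs v.
Proof. by inversion 1; exists vs. Qed.

Lemma reval_rec0_inv a g h xs v : reval a (RPrimRec g h) (0 :: xs) v -> reval a g xs v.
Proof. by inversion 1. Qed.

Lemma reval_recS_inv a g h n xs v : reval a (RPrimRec g h) (n.+1 :: xs) v ->
  exists2 w, reval a (RPrimRec g h) (n :: xs) w & reval a h [:: n, w & xs] v.
Proof. by inversion 1; exists w. Qed.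

Lemma reval_rec_nil_inv a g h v : reval a (RPrimRec g h) [::] v -> reval a g [::] v.
Proof. by inversion 1. Qed.

Lemma reval_mu_inv a f args n : reval a (RMu f) args n ->
  reval a f (n :: args) 0 /\ forall m, m < n -> exists k, reval a f (m :: args) k.+1.
Proof. by inversion 1. Qed.

Lemma revals_cons_inv a g gs args vs : revals a (g :: gs) args vs ->
  exists v vs', [/\ vs = v :: vs', reval a g args v & revals a gs args vs'].
Proof. by inversion 1; exists v, vs0. Qed.

Fixpoint reval_det a e args v (H : reval a e args v) {struct H} :
  forall v', reval a e args v' -> v = v'
with revals_det a gs args vs (H : revals a gs args vs) {struct H} :
  forall vs', revals a gs args vs' -> vs = vs'.
Proof.
- case: H => {e args v}.
  + by move=> args v'; inversion 1.
  + by move=> args v'; inversion 1.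
  + by move=> i args v'; inversion 1.
  + by move=> args v'; inversion 1.
  + move=> f gs args vs v Hgs Hf v' /reval_comp_inv [vs' /(revals_det _ _ _ _ Hgs) <- Hf'].
    exact: reval_det _ _ _ _ Hf _ Hf'.
  + by move=> g h xs v Hg v' /reval_rec0_inv Hg'; exact: reval_det _ _ _ _ Hg _ Hg'.
  + move=> g h n xs w v H1 H2 v' /reval_recS_inv [w' /(reval_det _ _ _ _ H1) <- H2'].
    exact: reval_det _ _ _ _ H2 _ H2'.
  + by move=> g h v Hg v' /reval_rec_nil_inv Hg'; exact: reval_det _ _ _ _ Hg _ Hg'.
  + move=> f args n H0 Hlt v' /reval_mu_inv [H0' Hlt'].
    case: (ltngtP n v') => // [/Hlt'|/Hlt] [k Hk].
    * by have := reval_det _ _ _ _ H0 _ Hk.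
    * by have := reval_det _ _ _ _ Hk _ H0'.
- case: H => {gs args vs}.
  + by move=> args vs'; inversion 1.
  + move=> g gs args v vs Hg Hgs vs' /revals_cons_inv [v' [vs'' [-> Hg' Hgs']]].
    by rewrite (reval_det _ _ _ _ Hg _ Hg') (revals_det _ _ _ _ Hgs _ Hgs').
Qed.

(** * FindHS is not reducible to the characteristic function of a Pi11 set *)

Definition pair_entry (M v : nat) :=
  v = 0 \/ exists a b, [/\ M <= a, a < b & v = (code [:: a; b]).+1].

Definition pairs_from (M : nat) : Baire := fun n =>
  if decode n is [:: a; b] then if (M <= a) && (a < b) then n.+1 else 0 else 0.

Definition tail_from (q : Baire) (N M : nat) := forall n, N <= n -> q n = pairs_from M n.

Definition extends (q : Baire) (N M : nat) (r : Baire) :=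
  agree_below N q r /\ forall n, N <= n -> pair_entry M (r n).

Lemma pair_entry_pairs_from M n : pair_entry M (pairs_from M n).
Proof.
rewrite /pairs_from; case E: (decode n) => [|a [|b []]]; try by left.
case: andP => [[le_Ma lt_ab]|_]; last by left.
by right; exists a, b; rewrite -E CodeSeq.decodeK.
Qed.

Lemma pair_entry_mono M M' v : M <= M' -> pair_entry M' v -> pair_entry M v.
Proof.
move=> le_MM' [->|[a [b [le_M'a lt_ab ->]]]]; first by left.
by right; exists a, b; split; rewrite // (leq_trans le_MM' le_M'a).
Qed.

Lemma extends_tail q N M : tail_from q N M -> extends q N M q.
Proof. by move=> tail; split=> // n /tail ->; apply: pair_entry_pairs_from. Qed.

Lemma extends_trans q N M q' N' M' r : N <= N' -> M <= M' ->
  extends q N M q' -> extends q' N' M' r -> extends q N M r.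
Proof.
move=> le_NN' le_MM' [agree_q' entries_q'] [agree_r entries_r]; split.
  by move=> i lt_iN; rewrite agree_r ?(leq_trans lt_iN le_NN') // agree_q'.
move=> n le_Nn; case: (ltnP n N') => [lt_nN'|le_N'n].
  by rewrite agree_r //; apply: entries_q'.
exact: pair_entry_mono le_MM' (entries_r n le_N'n).
Qed.

Lemma enumerated_pair_entry M (r : Baire) s :
  (forall n, pair_entry M (r n)) -> enumerated r s ->
  exists a b, [/\ s = [:: a; b], M <= a & a < b].
Proof.
move=> entries [n]; case: (entries n) => [->|[a [b [le_Ma lt_ab ->]]]] //.
by rewrite /seqcode => /succn_inj/code_inj <-; exists a, b.
Qed.

Lemma pairs_name_dom q N M : tail_from q N M -> (forall n, pair_entry 0 (q n)) ->
  pdom FindHS_Sigma01 q.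
Proof.
move=> tail entries; pose h n := N + M + n.
have h_inc : strinc h by move=> n; rewrite /h ltn_add2l.
have h_sol g : strinc g -> in_open q (h \o g).
  move=> g_inc; split; first exact: strinc_comp.
  exists [:: h (g 0); h (g 1)]; split=> //; exists (code [:: h (g 0); h (g 1)]).
  have /andP[lt_code _] := CodeSeq.ltn_code [:: h (g 0); h (g 1)].
  rewrite tail; last by apply: leq_trans (ltnW lt_code); rewrite /h -addnA leq_addr.
  by rewrite /pairs_from CodeSeq.codeK /h ltn_add2l g_inc -addnA addnCA leq_addr.
have h_hom : homogeneous (in_open q) h by split=> //; left.
have h_in : in_open q h := h_sol id (fun n => ltnSn n).
exists h; split; last by split; [exists h | ].
by move=> s /(enumerated_pair_entry entries) [a [b [-> _ lt_ab]]]; rewrite /= lt_ab.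
Qed.

Definition const_bit (b : nat) : Baire := fun n => if n is 0 then b else 0.

Definition forced (e : rcode) (b : nat) (q : Baire) (N M : nat) :=
  (forall r, extends q N M r -> forall v, ~ reval (pairB r (const_bit b)) e [:: 0] v) \/
  (exists v B, forall r, extends q N M r ->
     reval (pairB r (const_bit b)) e [:: 0] v /\ forall w, enumerated r [:: v; w] -> w < B).

Lemma pairB_agree N p p' c : agree_below N p p' -> agree_below N (pairB p c) (pairB p' c).
Proof.
move=> agree_p i lt_iN; rewrite /pairB; case: odd => //; apply: agree_p.
by rewrite ltn_half_double (leq_trans lt_iN) // -addnn leq_addr.
Qed.

Lemma force_output e b q N M : tail_from q N M -> exists q' N' M',
  [/\ tail_from q' N' M', extends q N M q' & forced e b q' N' M'].
Proof.
move=> tail.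
pose converges r v := reval (pairB r (const_bit b)) e [:: 0] v.
case: (classic (exists r v, extends q N M r /\ converges r v)) => [|diverge]; last first.
  exists q, N, M; split=> //; first exact: extends_tail.
  by left=> r ext_r v conv_r; apply: diverge; exists r, v.
(* Freeze [r] beyond the use of its convergent computation and raise the threshold above
   [v]: then only the frozen part can enumerate pairs [[v; w]]. *)
move=> [r [v [[agree_r entries_r] conv_r]]]; have [U use_U] := reval_use conv_r.
pose N' := maxn N U; pose M' := maxn M v.+1.
pose q' n := if n < N' then r n else pairs_from M' n.
exists q', N', M'; split.
- by move=> n; rewrite /q' ltnNge => ->.
- split=> [i lt_iN|n le_Nn]; rewrite /q'.
    by rewrite (leq_trans lt_iN (leq_maxl _ _)) agree_r.
  case: ifP => _; first exact: entries_r.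
  exact: pair_entry_mono (leq_maxl _ _) (pair_entry_pairs_from _ _).
right; exists v, (\max_(0 <= i < N') r i) => r2 [agree2 entries2]; split.
  apply: use_U; apply: pairB_agree => i lt_iU.
  by rewrite agree2 /q' ?(leq_trans lt_iU (leq_maxr _ _)).
move=> w [n r2n]; case: (ltnP n N') => [lt_nN'|le_N'n].
  have /and3P[_ lt_w _] := CodeSeq.ltn_code [:: v; w].
  have : r n <= \max_(0 <= i < N') r i by rewrite (leq_bigmax_seq n) ?mem_index_iota.
  have -> : r n = r2 n by rewrite agree2 // /q' lt_nN'.
  by rewrite r2n => le_max; exact: leq_trans lt_w (ltnW le_max).
case: (entries2 n le_N'n) => [r2n0|[a [c [le_M'a _ r2n']]]]; first by rewrite r2n0 in r2n.
move: r2n; rewrite r2n' /seqcode => /succn_inj/code_inj [eq_av _].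
by move: le_M'a; rewrite eq_av geq_max ltnn andbF.
Qed.

Lemma forced_refutes e b q N M s r : extends q N M s -> (forall n, pair_entry 0 (s n)) ->
  forced e b q N M -> comp_fun e (pairB s (const_bit b)) r -> ~ FindHS_Sigma01 s r.
Proof.
move=> ext_s entries [diverge|[v [B converge]]] out_r [_ [_ [r_hom r_in]]].
  exact: diverge s ext_s (r 0) (out_r 0).
have [conv_s small] := converge s ext_s.
have r0 : r 0 = v := reval_det (out_r 0) conv_s.
(* The generator of [P] met by [r \o g] must be the pair [[r 0; r (B + 1)]]. *)
pose g k := if k is 0 then 0 else B + k.
have g_inc : strinc g by case=> [|k] /=; rewrite ?addn1 ?addnS.
have [_ [t [enum_t t_init]]] := homogeneous_comp r_hom r_in g_inc.
have [a [c [t_ac _ _]]] := enumerated_pair_entry entries enum_t.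
move: t_init enum_t; rewrite t_ac /= => -[-> ->]; rewrite r0 => /small.
by rewrite ltnNge (leq_trans _ (strinc_ge _ r_hom.1)) ?leq_addr.
Qed.

Lemma FindHS_not_le_chi : ~ weih_le FindHS_Sigma01 chi_Pi11.
Proof.
case=> ePhi [ePsi red].
pose bit q : nat := if excluded_middle_informative (wellfounded_tree q) then 1 else 0.
have G_real : realizes (fun q => const_bit (bit q)) chi_Pi11.
  by move=> q [_ [q_tree _]]; rewrite /chi_Pi11 /bit; case: excluded_middle_informative.
have tail0 : tail_from (pairs_from 0) 0 0 by [].
have [q1 [N1 [M1 [tail1 ext01 forced1]]]] := force_output ePsi 0 tail0.
have [q2 [N2 [M2 [tail2 ext12 forced2]]]] := force_output ePsi 1 tail1.
have entries2 n : pair_entry 0 (q2 n).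
  by have [_ entries] := extends_trans (leq0n N1) (leq0n M1) ext01 ext12; apply: entries.
have [q [r [_ [out_r sol_r]]]] := red _ G_real q2 (pairs_name_dom tail2 entries2).
have bit01 : bit q = 0 \/ bit q = 1.
  by rewrite /bit; case: excluded_middle_informative; [right|left].
case: bit01 out_r => /= -> out_r.
- exact: forced_refutes ext12 entries2 forced1 out_r sol_r.
- exact: forced_refutes (extends_tail tail2) entries2 forced2 out_r sol_r.
Qed.

Theorem mainTheorem11 :
  weih_le sTC_NN FindHS_Sigma01 /\ weih_lt chi_Pi11 FindHS_Sigma01.
Proof.
split; first exact: sTC_le_FindHS.
by split; [exact: chi_le_FindHS | exact: FindHS_not_le_chi].
Qed.
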